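(* Let $Q$ be a finite quiver. Every unital semisimple subalgebra of the path algebra $\Bbbk Q$ is isomorphic to $\Bbbk^n$ for some $n$.
   Context: $\Bbbk$ is an algebraically closed field of characteristic zero. $\Bbbk Q$ has as basis all paths in $Q$ of length $\ge0$, with multiplication by concatenation (zero if not composable); its unit is the sum of the vertex idempotents. A unital subalgebra contains the unit $1$ of $\Bbbk Q$. *)

From HB Require Import structures.
From mathcomp Require Import all_boot all_order all_algebra.
Set Implicit Arguments. Unset Strict Implicit. Unset Printing Implicit Defensive.
Import GRing.Theory.
Local Open Scope ring_scope.

Record quiver := Quiver {
  nV : nat; nA : nat;
  qsrc : 'I_nA -> 'I_nV;
  qtgt : 'I_nA -> 'I_nV }.

Section PathAlgebra.
Variable k : fieldType.
Variable Q : quiver.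

Definition vert := 'I_(nV Q).
Definition arr := 'I_(nA Q).

(* A (candidate) path: a starting vertex and a list of arrows, traversed
   left to right.  Length-0 paths (v, [::]) are the trivial paths e_v. *)
Definition qpath := (vert * seq arr)%type.

Fixpoint valid_from (v : vert) (s : seq arr) : bool :=
  match s with
  | [::] => true
  | a :: s' => (qsrc a == v) && valid_from (qtgt a) s'
  end.

Definition valid_path (p : qpath) : bool := valid_from p.1 p.2.

Definition endpt (v : vert) (s : seq arr) : vert := foldl (fun _ a => qtgt a) v s.

(* Elements of k Q: k-valued functions on paths with finite support
   consisting of (valid) paths. *)
Definition pelt := qpath -> k.

Definition in_kQ (f : pelt) : Prop :=
  exists l : seq qpath, forall p, f p != 0 -> (p \in l) && valid_path p.

Definition pzero : pelt := fun _ => 0.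
Definition padd (f g : pelt) : pelt := fun p => f p + g p.
Definition pscale (c : k) (f : pelt) : pelt := fun p => c * f p.
(* multiplication extending concatenation of paths bilinearly:
   (f g)(p) = sum over factorizations p = p1 p2 of f(p1) g(p2) *)
Definition pmul (f g : pelt) : pelt := fun p =>
  \sum_(i < (size p.2).+1)
     f (p.1, take i p.2) * g (endpt p.1 (take i p.2), drop i p.2).
(* unit = sum of all trivial paths e_v *)
Definition pone : pelt := fun p => if p.2 is [::] then 1 else 0.

Definition unital_subalgebra (S : pelt -> Prop) : Prop :=
  [/\ (forall f, S f -> in_kQ f),
      S pzero /\ S pone,
      (forall f g, S f -> S g -> S (padd f g)),
      (forall c f, S f -> S (pscale c f))
    & (forall f g, S f -> S g -> S (pmul f g))].

Definition left_ideal (S L : pelt -> Prop) : Prop :=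
  [/\ (forall f, L f -> S f),
      L pzero,
      (forall f g, L f -> L g -> L (padd f g)),
      (forall c f, L f -> L (pscale c f))
    & (forall a f, S a -> L f -> L (pmul a f))].

(* S is semisimple: the left regular module S is semisimple, i.e. every
   submodule (left ideal) is a direct summand. *)
Definition semisimple (S : pelt -> Prop) : Prop :=
  forall L, left_ideal S L ->
  exists L', [/\ left_ideal S L',
                 (forall f, L f -> L' f -> f = pzero)
               & (forall f, S f -> exists g h, [/\ L g, L' h & f = padd g h])].

Definition iso_kn (S : pelt -> Prop) (n : nat) : Prop :=
  exists psi : {ffun 'I_n -> k} -> pelt,
  [/\ injective psi,
      (forall x, S (psi x)) /\ (forall f, S f -> exists x, psi x = f),
      (forall x y : {ffun 'I_n -> k}, psi [ffun i => x i + y i] = padd (psi x) (psi y)) /\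
      (forall c (x : {ffun 'I_n -> k}), psi [ffun i => c * x i] = pscale c (psi x)),
      (forall x y : {ffun 'I_n -> k}, psi [ffun i => x i * y i] = pmul (psi x) (psi y))
    & psi [ffun => 1] = pone].

End PathAlgebra.

From mathcomp Require Import all_boot all_order all_algebra.
From Stdlib Require Import ClassicalEpsilon FunctionalExtensionality.
Set Implicit Arguments. Unset Strict Implicit. Unset Printing Implicit Defensive.
Import GRing.Theory.
Local Open Scope ring_scope.

(** Reading off the coefficients of the trivial paths [e_v] is a unital algebra
    map [kQ -> k^Q_0], whose kernel consists of the combinations of paths of
    positive length.  An idempotent in that kernel vanishes: in [e = e * e] every
    factorisation of a path either starts with a trivial path or ends with a
    strictly shorter one.  In a semisimple subalgebra [S] the kernel is a left
    ideal with a complement [L']; writing [1 = g + h] accordingly, [g = g * g]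
    because [g * h] lies in both, so [g = 0], [1 \in L'] and the kernel is [0].
    Hence [S] is isomorphic to a unital subalgebra of [k^Q_0], and such a
    subalgebra is exactly the set of functions constant on the classes of
    vertices it does not separate, i.e. [k^n] for [n] the number of classes. *)

Section SubalgebraOfFunctions.
Variables (k : fieldType) (V : finType) (A : (V -> k) -> Prop).
Hypotheses (A1 : A (fun=> 1))
  (AD : forall a b, A a -> A b -> A (fun v => a v + b v))
  (AZ : forall c a, A a -> A (fun v => c * a v))
  (AM : forall a b, A a -> A b -> A (fun v => a v * b v)).

Lemma subalg_ext a b : a =1 b -> A a -> A b.
Proof. by move/functional_extensionality => ->. Qed.

Lemma subalg_sum (I : Type) (s : seq I) (F : I -> V -> k) :
  (forall i, A (F i)) -> A (fun v => \sum_(i <- s) F i v).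
Proof.
move=> AF; elim: s => [|i s IHs].
  by apply: subalg_ext (AZ 0 A1) => v; rewrite big_nil mul0r.
by apply: subalg_ext (AD (AF i) IHs) => v; rewrite big_cons.
Qed.

Definition agree (u v : V) : Prop := forall a, A a -> a u = a v.

Definition agreeb (u v : V) : bool :=
  if excluded_middle_informative (agree u v) then true else false.

Lemma agreeP u v : reflect (agree u v) (agreeb u v).
Proof. by rewrite /agreeb; case: excluded_middle_informative; constructor. Qed.

Lemma separating_elt u r : exists2 a, A a & a r = 1 /\ (~ agree u r -> a u = 0).
Proof.
have [ur | uNr] := classic (agree u r); first by exists (fun=> 1).
have [a /(imply_to_and (A a)) [Aa /eqP aur]] := not_all_ex_not _ _ uNr.
exists (fun v => (a r - a u)^-1 * (a v - a u)).
  by apply: AZ; apply: AD Aa _; apply: subalg_ext (AZ (- a u) A1) => v; rewrite mulr1.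
by rewrite subrr mulr0 mulVf // subr_eq0 eq_sym.
Qed.

Lemma indicator_agree r : A (fun v => (agreeb v r)%:R).
Proof.
have [a Aa [ar1 aNr0]] : exists2 a, A a & a r = 1 /\ forall v, ~ agree v r -> a v = 0.
  suff [a Aa [ar1 aNr0]] : exists2 a, A a & a r = 1 /\
      forall v, v \in enum V -> ~ agree v r -> a v = 0.
    by exists a => //; split => // v; apply: aNr0; rewrite mem_enum.
  elim: (enum V) => [|u s [a Aa [ar1 aNr0]]]; first by exists (fun=> 1).
  have [b Ab [br1 bNr0]] := separating_elt u r.
  exists (fun v => b v * a v); first exact: AM.
  split=> [|v]; first by rewrite br1 ar1 mulr1.
  by rewrite inE => /orP[/eqP -> /bNr0 -> | /aNr0 a0 /a0 ->]; rewrite ?mul0r ?mulr0.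
apply: (subalg_ext _ Aa) => v; case: agreeP => [vr | /aNr0 //].
by rewrite (vr a Aa).
Qed.

Definition agree_class (v : V) : {set V} := [set u | agreeb u v].
Definition agree_classes : {set {set V}} := [set agree_class v | v : V].

Lemma agree_class_classes v : agree_class v \in agree_classes.
Proof. exact: imset_f. Qed.

Definition class_idx (v : V) : 'I_#|agree_classes| :=
  enum_rank_in (agree_class_classes v) (agree_class v).

Lemma agree_class_eq u v : agree_class u = agree_class v <-> agree u v.
Proof.
split=> [uv | uv].
  have : u \in agree_class v by rewrite -uv inE; apply/agreeP.
  by rewrite inE => /agreeP.
apply/setP => w; rewrite !inE.
by apply/agreeP/agreeP => wuv a Aa; rewrite wuv // uv.
Qed.

Lemma class_idx_eqE u v : (class_idx u == class_idx v) = agreeb u v.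
Proof.
apply/eqP/agreeP => [/(congr1 enum_val) | /agree_class_eq uv].
  by rewrite !enum_rankK_in ?agree_class_classes // => /agree_class_eq.
rewrite /class_idx (eq_enum_rank_in _ (agree_class_classes v)) ?uv //.
exact: agree_class_classes.
Qed.

Lemma class_idx_surj i : exists v, class_idx v = i.
Proof.
have /imsetP[v _ iv] := enum_valP i; exists v; apply: enum_val_inj.
by rewrite enum_rankK_in ?iv // agree_class_classes.
Qed.

Lemma subalg_class_idx (x : 'I_#|agree_classes| -> k) : A (fun v => x (class_idx v)).
Proof.
have Ai i : A (fun v => x i * (class_idx v == i)%:R).
  have [r <-] := class_idx_surj i; apply: AZ.
  apply: subalg_ext (indicator_agree r) => v.
  by rewrite class_idx_eqE.
apply: subalg_ext (subalg_sum (index_enum _) Ai) => v.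
under eq_bigr do rewrite mulr_natr mulrb.
by rewrite -big_mkcond (big_pred1 (class_idx v)) // => i; rewrite eq_sym.
Qed.

Lemma class_idx_factor a : A a ->
  exists x : {ffun 'I_#|agree_classes| -> k}, forall v, a v = x (class_idx v).
Proof.
move=> Aa; exists [ffun i => if [pick v | class_idx v == i] is Some v then a v else 0].
move=> v; rewrite ffunE; case: pickP => [u /[!class_idx_eqE] /agreeP uv | /(_ v)].
  by rewrite (uv a Aa).
by rewrite eqxx.
Qed.

End SubalgebraOfFunctions.

Section PathAlgebra.
Variables (k : fieldType) (Q : quiver).
Implicit Types (f g h e : pelt k Q).

Definition trivial_part f : vert Q -> k := fun v => f (v, [::]).

Lemma trivial_partD f g v :
  trivial_part (padd f g) v = trivial_part f v + trivial_part g v.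
Proof. by []. Qed.

Lemma trivial_partZ c f v : trivial_part (pscale c f) v = c * trivial_part f v.
Proof. by []. Qed.

Lemma trivial_partM f g v :
  trivial_part (pmul f g) v = trivial_part f v * trivial_part g v.
Proof. by rewrite /trivial_part /pmul big_ord1. Qed.

Lemma add0p f : padd (@pzero k Q) f = f.
Proof. by apply: functional_extensionality => p; rewrite /padd add0r. Qed.

Lemma addp0 f : padd f (@pzero k Q) = f.
Proof. by apply: functional_extensionality => p; rewrite /padd addr0. Qed.

Lemma mulp1 f : pmul f (@pone k Q) = f.
Proof.
apply: functional_extensionality => -[v s].
rewrite /pmul big_ord_recr /= take_size drop_size mulr1 big1 ?add0r // => i _.
have : size (drop i s) != 0 by rewrite size_drop subn_eq0 -ltnNge.
by case: (drop i s) => // *; rewrite mulr0.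
Qed.

Lemma mulpDr f g h : pmul f (padd g h) = padd (pmul f g) (pmul f h).
Proof.
apply: functional_extensionality => p.
by rewrite /pmul /padd -big_split; apply: eq_bigr => i _; rewrite mulrDr.
Qed.

Lemma idempotent_trivial_part0 e :
  pmul e e = e -> trivial_part e =1 (fun=> 0) -> e = @pzero k Q.
Proof.
move=> ee e0; apply: functional_extensionality => -[v s].
have [n] := ubnP (size s); elim: n v s => // n IHn v [|a s] sn; first exact: e0.
rewrite -ee /pmul big_ord_recl big1 => [|i _]; first by rewrite [e _]e0 mul0r addr0.
by rewrite [e (_, drop _ _)]IHn ?mulr0 //= size_drop (leq_ltn_trans (leq_subr _ _)).
Qed.

Variable S : pelt k Q -> Prop.
Hypothesis HS : unital_subalgebra S.

Definition ker_trivial_part f : Prop := S f /\ trivial_part f =1 (fun=> 0).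

Lemma ker_trivial_part_left_ideal : left_ideal S ker_trivial_part.
Proof.
have [_ [S0 _] SD SZ SM] := HS.
split=> [f [] // | // | f g [Sf f0] [Sg g0] | c f [Sf f0] | a f Sa [Sf f0]].
- by split=> [|v]; [exact: SD | rewrite trivial_partD f0 g0 addr0].
- by split=> [|v]; [exact: SZ | rewrite trivial_partZ f0 mulr0].
- by split=> [|v]; [exact: SM | rewrite trivial_partM f0 mulr0].
Qed.

Definition trivial_part_image (a : vert Q -> k) : Prop :=
  exists f, S f /\ trivial_part f =1 a.

Lemma trivial_part_image_subalg :
  [/\ trivial_part_image (fun=> 1),
      forall a b, trivial_part_image a -> trivial_part_image b ->
        trivial_part_image (fun v => a v + b v),
      forall c a, trivial_part_image a -> trivial_part_image (fun v => c * a v)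
    & forall a b, trivial_part_image a -> trivial_part_image b ->
        trivial_part_image (fun v => a v * b v)].
Proof.
have [_ [_ S1] SD SZ SM] := HS.
split=> [|a b [f [Sf fa]] [g [Sg gb]] | c a [f [Sf fa]] | a b [f [Sf fa]] [g [Sg gb]]].
- by exists (@pone k Q).
- by exists (padd f g); split=> [|v]; [exact: SD | rewrite trivial_partD fa gb].
- by exists (pscale c f); split=> [|v]; [exact: SZ | rewrite trivial_partZ fa].
- by exists (pmul f g); split=> [|v]; [exact: SM | rewrite trivial_partM fa gb].
Qed.

Hypothesis Hss : semisimple S.

Lemma ker_trivial_part_eq0 f : ker_trivial_part f -> f = @pzero k Q.
Proof.
have [_ [_ S1] _ _ SM] := HS.
have [L' [[L'S _ _ _ L'M] KL'0 KL'_S]] := Hss ker_trivial_part_left_ideal.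
have [g [h [[Sg g0] L'h gh1]]] := KL'_S _ S1.
have gh0 : pmul g h = @pzero k Q.
  apply: KL'0; last exact: L'M.
  by split=> [|v]; [exact: SM (L'S _ L'h) | rewrite trivial_partM g0 mul0r].
have gg : pmul g g = g by rewrite -{3}(mulp1 g) gh1 mulpDr gh0 addp0.
have h1 : h = @pone k Q by rewrite gh1 (idempotent_trivial_part0 gg g0) add0p.
move=> Kf; apply: KL'0 => //.
by rewrite -(mulp1 f) -h1; apply: L'M => //; case: Kf.
Qed.

Lemma trivial_part_inj f g : S f -> S g -> trivial_part f =1 trivial_part g -> f = g.
Proof.
have [_ _ SD SZ _] := HS.
move=> Sf Sg fg; have : padd f (pscale (-1) g) = @pzero k Q.
  apply: ker_trivial_part_eq0; split=> [|v]; first by apply: SD => //; apply: SZ.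
  by rewrite trivial_partD trivial_partZ fg mulN1r subrr.
move=> fg0; apply: functional_extensionality => p; apply/eqP.
by rewrite -subr_eq0 -mulN1r; apply/eqP/(congr1 (fun F => F p) fg0).
Qed.

End PathAlgebra.

Theorem mainTheorem13 (k : closedFieldType) (hk : [pchar k]%R =i pred0)
  (Q : quiver) (S : pelt k Q -> Prop) :
  unital_subalgebra S -> semisimple S -> exists n : nat, iso_kn S n.
Proof.
move=> HS Hss; have [_ [_ S1] SD SZ SM] := HS.
have [A1 AD AZ AM] := trivial_part_image_subalg HS.
set A := trivial_part_image S in A1 AD AZ AM.
pose idx := class_idx A.
have [psi psiP] := choice _ (subalg_class_idx A1 AD AZ AM).
have Spsi x : S (psi x) by case: (psiP x).
have psiE x v : trivial_part (psi x) v = x (idx v) by case: (psiP x).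
have psi_eq x f : S f -> trivial_part f =1 (fun v => x (idx v)) -> psi x = f.
  by move=> Sf fx; apply: (trivial_part_inj HS Hss) => // v; rewrite psiE fx.
exists #|agree_classes A|, (fun x : {ffun 'I_#|agree_classes A| -> k} => psi x); split.
- move=> x y xy; apply/ffunP => i.
  by have [v <-] := class_idx_surj i; rewrite -!psiE xy.
- split=> // f Sf; have [|x fx] := @class_idx_factor _ _ A (trivial_part f).
    by exists f.
  by exists x; apply: psi_eq.
- split=> [x y | c x].
    by apply: psi_eq => [|v]; [exact: SD | rewrite trivial_partD !psiE ffunE].
  by apply: psi_eq => [|v]; [exact: SZ | rewrite trivial_partZ !psiE ffunE].
- by move=> x y; apply: psi_eq => [|v]; [exact: SM | rewrite trivial_partM !psiE ffunE].
- by apply: psi_eq => // v; rewrite ffunE.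
Qed.
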